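(* For every $\mathrm{HyperLTL}_{\mathrm{temp}}$ formula $\psi$, every weighted Kripke structure $K$, and every trace assignment $\Pi$ such that $\Pi(\pi)\in\mathbb L(K)$ for every free variable $\pi$ of $\psi$, $$\llbracket\psi\rrbracket_{\mathbb T(K)}(\Pi)=\llbracket\psi\rrbracket_{\mathbb L(K)}(\Pi).$$ In particular, for closed $\psi$, $\llbracket\psi\rrbracket_{\mathbb T(K)}([\,])=\llbracket\psi\rrbracket_{\mathbb L(K)}([\,])$.
   Context: Fix a finite set $\mathrm{AP}$ of atomic propositions and an infinite set $\mathcal V$ of trace variables. A trace is an infinite sequence $t=t[0]t[1]\cdots$ with $t[i]\in[0,1]^{\mathrm{AP}}$; $\mathbb T$ is the set of all traces; $t[i,\infty]$ is the suffix from position $i$. A lasso is a trace of the form $uv^\omega$ with $u,v$ finite words ($v$ non-empty). A trace assignment $\Pi$ is a partial map $\mathcal V\rightharpoonup\mathbb T$; $\Pi[i,\infty]$ is $\pi\mapsto\Pi(\pi)[i,\infty]$; $\Pi[\pi\mapsto t]$ is $\Pi$ updated at $\pi$; $[\,]$ is the empty assignment. A weighted Kripke structure is $K=(S,\mathbb W,I,\to,L)$ with $S$ finite, $\mathbb W\subset[0,1]$ a finite set of rational weights, $I\subseteq S$ non-empty, $\to\subseteq S\times S$ total, $L:S\to\mathbb W^{\mathrm{AP}}$. $\mathbb T(K)$ is the set of traces $L(s_0)L(s_1)\cdots$ for infinite paths $s_0\to s_1\to\cdots$ with $s_0\in I$; $\mathbb L(K)$ is the set of lassos in $\mathbb T(K)$.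 A discounting sequence is a strictly decreasing sequence $\eta=(\eta_i)_{i\in\mathbb N}$ of rationals in $(0,1]$ with $\lim_i\eta_i=0$, assumed recursively enumerable. $\mathrm{HyperLTL}_{\mathrm{temp}}$ (parameterised by a finite set $\mathcal D$ of discounting sequences) has syntax $\psi::=\forall\pi\,\psi\mid\exists\pi\,\psi\mid\phi$, $\phi::=p_\pi\mid\neg\phi\mid\phi\vee\phi\mid X\phi\mid\phi U\phi\mid\phi U_\eta\phi$ ($\eta\in\mathcal D$). For non-empty $T\subseteq\mathbb T$: $\llbracket p_\pi\rrbracket_T(\Pi)=\Pi(\pi)[0](p)$, $\llbracket\neg\phi\rrbracket=1-\llbracket\phi\rrbracket$, $\vee$ is $\max$, $\llbracket X\phi\rrbracket_T(\Pi)=\llbracket\phi\rrbracket_T(\Pi[1,\infty])$, $\llbracket\phi_1U\phi_2\rrbracket_T(\Pi)=\sup_{i\ge0}\min\big(\llbracket\phi_2\rrbracket_T(\Pi[i,\infty]),\min_{0\le j<i}\llbracket\phi_1\rrbracket_T(\Pi[j,\infty])\big)$, $\llbracket\phi_1U_\eta\phi_2\rrbracket_T(\Pi)=\sup_{i\ge0}\min\big(\eta_i\llbracket\phi_2\rrbracket_T(\Pi[i,\infty]),\min_{0\le j<i}\eta_j\llbracket\phi_1\rrbracket_T(\Pi[j,\infty])\big)$, $\llbracket\forall\pi\,\psi\rrbracket_T(\Pi)=\inf_{t\in T}\llbracket\psi\rrbracket_T(\Pi[\pi\mapsto t])$, $\llbracket\exists\pi\,\psi\rrbracket_T(\Pi)=\sup_{t\in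 T}\llbracket\psi\rrbracket_T(\Pi[\pi\mapsto t])$. *)

From HB Require Import structures.
From mathcomp Require Import all_boot all_order all_algebra.
From mathcomp Require Import boolp classical_sets reals.
Set Implicit Arguments. Unset Strict Implicit. Unset Printing Implicit Defensive.
Import Order.TTheory GRing.Theory Num.Theory.
Local Open Scope ring_scope.
Local Open Scope classical_set_scope.

Definition tvar := nat.

(* traces over the atomic propositions AP, valued in R (meant to be [0,1]) *)
Definition trace (AP : finType) (R : realType) := nat -> (AP -> R).

Definition suffix AP R (t : trace AP R) (i : nat) : trace AP R := fun k => t (k + i)%N.

(* lasso u v^omega, v non-empty *)
Definition is_lasso AP R (t : trace AP R) : Prop :=
  exists (u v : seq (AP -> R)), v != [::] /\
    forall i, t i = if (i < size u)%N then nth (fun _ => 0) u i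
                    else nth (fun _ => 0) v ((i - size u) %% size v)%N.

Definition discounting (eta : nat -> rat) : Prop :=
  (forall i, eta i.+1 < eta i) /\ (forall i, 0 < eta i /\ eta i <= 1) /\
  (forall eps : rat, 0 < eps -> exists N, forall i, (N <= i)%N -> eta i < eps).

Inductive qf (AP : Type) : Type :=
  | Prop_ (p : AP) (pi : tvar)
  | Neg (f : qf AP)
  | Or (f g : qf AP)
  | Next (f : qf AP)
  | Until (f g : qf AP)
  | DUntil (eta : nat -> rat) (f g : qf AP).

Inductive hform (AP : Type) : Type :=
  | Forall (pi : tvar) (f : hform AP)
  | Exists (pi : tvar) (f : hform AP)
  | QF (f : qf AP).

Fixpoint qf_wf AP (f : qf AP) : Prop :=
  match f with
  | Prop_ _ _ => True
  | Neg g => qf_wf g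
  | Or g h | Until g h => qf_wf g /\ qf_wf h
  | Next g => qf_wf g
  | DUntil eta g h => discounting eta /\ qf_wf g /\ qf_wf h
  end.
Fixpoint hform_wf AP (f : hform AP) : Prop :=
  match f with
  | Forall _ g | Exists _ g => hform_wf g
  | QF g => qf_wf g
  end.

Fixpoint qf_fv AP (f : qf AP) (x : tvar) : bool :=
  match f with
  | Prop_ _ pi => pi == x
  | Neg g | Next g => qf_fv g x
  | Or g h | Until g h | DUntil _ g h => qf_fv g x || qf_fv h x
  end.
Fixpoint hform_fv AP (f : hform AP) (x : tvar) : bool :=
  match f with
  | Forall pi g | Exists pi g => (pi != x) && hform_fv g x
  | QF g => qf_fv g x
  end.

Definition assignment AP R := tvar -> option (trace AP R).
Definition empty_assign AP R : assignment AP R := fun _ => None.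
Definition shift AP R (Pi : assignment AP R) (i : nat) : assignment AP R :=
  fun x => omap (fun t => suffix t i) (Pi x).
Definition update AP R (Pi : assignment AP R) (pi : tvar) (t : trace AP R)
  : assignment AP R := fun x => if x == pi then Some t else Pi x.

Section Semantics.
Variables (AP : finType) (R : realType).

(* min over j < i of F j; the empty min is 1 (the top of [0,1]) *)
Definition min_lt (i : nat) (F : nat -> R) : R := \big[Num.min/1]_(j < i) F j.

Fixpoint qf_sem (f : qf AP) (Pi : assignment AP R) : R :=
  match f with
  | Prop_ p pi => match Pi pi with Some t => t 0%N p | None => 0 end
  | Neg g => 1 - qf_sem g Pi
  | Or g h => Num.max (qf_sem g Pi) (qf_sem h Pi)
  | Next g => qf_sem g (shift Pi 1)
  | Until g h =>
      sup [set x | exists i : nat, x = Num.min (qf_sem h (shift Pi i))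
                          (min_lt i (fun j => qf_sem g (shift Pi j)))]
  | DUntil eta g h =>
      sup [set x | exists i : nat, x = Num.min (ratr (eta i) * qf_sem h (shift Pi i))
                          (min_lt i (fun j => ratr (eta j) * qf_sem g (shift Pi j)))]
  end.

Fixpoint sem (T : set (trace AP R)) (f : hform AP) (Pi : assignment AP R) : R :=
  match f with
  | Forall pi g => inf [set x | exists2 t, T t & x = sem T g (update Pi pi t)]
  | Exists pi g => sup [set x | exists2 t, T t & x = sem T g (update Pi pi t)]
  | QF g => qf_sem g Pi
  end.
End Semantics.

Record kripke (AP : finType) := Kripke {
  St : finType;
  init : {set St};
  trans : rel St;
  lab : St -> AP -> rat;
  init_nonempty : init != finset.set0;
  trans_total : forall s, exists s', trans s s';
  lab_range : forall s p, 0 <= lab s p <= 1 }.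

Definition traces_of AP (R : realType) (K : kripke AP) : set (trace AP R) :=
  [set t | exists s : nat -> St K, s 0%N \in init K /\
     (forall i, trans (s i) (s i.+1)) /\
     (forall i p, t i p = ratr (lab (s i) p))].
Arguments traces_of {AP} R K.

Definition lassos_of AP (R : realType) (K : kripke AP) : set (trace AP R) :=
  [set t | traces_of R K t /\ is_lasso t].
Arguments lassos_of {AP} R K.

(* Fix a bound m on the variables and read m runs of K side by side as a word
   over the finite alphabet of m-tuples of states.  For every eps > 0 the value
   of a formula is then eps-recognizable: some colouring of finite words by a
   finite set makes the values of any two words that factorize into blocks of
   pairwise equal colours differ by at most eps.  Boolean connectives, Next and
   Until preserve this under a refined colouring; a discounted Until only
   depends, up to eps, on a bounded prefix; and a quantifier over runs of K is
   handled by colouring a block with all the colours it takes along paths of K,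
   together with their end states, so that paths can be glued block by block.
   Finally, for an eventually periodic word and any run, Ramsey's theorem yields
   a1 < a2 where the state, the residue modulo the period and all block colours
   repeat; looping the run back from a2 to a1 gives a lasso in the same class.
   So every value over traces is approximated within eps over lassos. *)

From mathcomp Require Import all_boot all_order all_algebra.
From mathcomp Require Import boolp classical_sets reals.
From mathcomp Require Import lra.
Set Implicit Arguments. Unset Strict Implicit. Unset Printing Implicit Defensive.
Import Order.TTheory GRing.Theory Num.Theory.

Definition unbounded (X : nat -> Prop) := forall n, exists x, (n <= x)%N /\ X x.

Lemma unbounded_pigeonhole (T : finType) (f : nat -> T) (X : nat -> Prop) :
  unbounded X -> exists a, unbounded (fun x => X x /\ f x = a).
Proof.
move=> hX; apply: contrapT => H.
have H' : forall a, exists n, forall x, (n <= x)%N -> ~ (X x /\ f x = a).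
  move=> a; apply: contrapT => Ha; apply: H; exists a => n.
  apply: contrapT => Hn; apply: Ha; exists n => x lex HX.
  by apply: Hn; exists x.
have [g Hg] := choice H'.
have [x [lex Xx]] := hX (\max_(a : T) g a).
apply: (Hg (f x) x) => //.
by apply: leq_trans lex; exact: (leq_bigmax_cond (f x)).
Qed.

Section Ramsey.
Variables (S : finType) (c : nat -> nat -> S).

Definition ubset := {X : nat -> Prop | unbounded X}.

Lemma ramsey_step_ex (X : ubset) : exists t : nat * S * ubset,
  proj1_sig X t.1.1 /\
  forall y, proj1_sig t.2 y -> [/\ proj1_sig X y, (t.1.1 < y)%N & c t.1.1 y = t.1.2].
Proof.
case: X => X hX /=.
have [x [_ Xx]] := hX 0%N.
have hX' : unbounded (fun y => X y /\ (x < y)%N).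
  move=> n; have [y [ley Xy]] := hX (maxn n x.+1).
  by exists y; rewrite (leq_trans (leq_maxl _ _) ley) (leq_trans (leq_maxr _ _) ley).
have [a ha] := unbounded_pigeonhole (c x) hX'.
by exists (x, a, exist _ _ ha) => /=; split => // y [[Xy xy] cy].
Qed.

Definition ramsey_step (X : ubset) := proj1_sig (cid (ramsey_step_ex X)).

Lemma ramsey_stepP (X : ubset) : proj1_sig X (ramsey_step X).1.1 /\
  forall y, proj1_sig (ramsey_step X).2 y ->
    [/\ proj1_sig X y, ((ramsey_step X).1.1 < y)%N & c (ramsey_step X).1.1 y = (ramsey_step X).1.2].
Proof. exact: (proj2_sig (cid (ramsey_step_ex X))). Qed.

Lemma unbounded_setT : unbounded (fun _ => True).
Proof. by move=> n; exists n. Qed.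

(* Every element of [ramsey_set k.+1] lies above [ramsey_point k] and has
   colour [ramsey_colour k] with it. *)
Fixpoint ramsey_set (k : nat) : ubset :=
  if k is k.+1 then (ramsey_step (ramsey_set k)).2 else exist _ _ unbounded_setT.

Definition ramsey_point k := (ramsey_step (ramsey_set k)).1.1.
Definition ramsey_colour k := (ramsey_step (ramsey_set k)).1.2.

Lemma ramsey_set_mono k l : (k <= l)%N ->
  forall y, proj1_sig (ramsey_set l) y -> proj1_sig (ramsey_set k) y.
Proof.
elim: l => [|l IH]; first by rewrite leqn0 => /eqP->.
rewrite leq_eqVlt => /orP[/eqP->//|]; rewrite ltnS => kl y /=.
by case/(proj2 (ramsey_stepP (ramsey_set l))) => Hy _ _; apply: IH.
Qed.

Lemma ramsey_pointP k l : (k < l)%N ->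
  (ramsey_point k < ramsey_point l)%N /\ c (ramsey_point k) (ramsey_point l) = ramsey_colour k.
Proof.
move=> kl; have H : proj1_sig (ramsey_set k.+1) (ramsey_point l).
  exact/(ramsey_set_mono kl)/(proj1 (ramsey_stepP (ramsey_set l))).
by case: ((proj2 (ramsey_stepP (ramsey_set k))) _ H).
Qed.

Lemma ramsey : exists q : nat -> nat, (forall i, (q i < q i.+1)%N) /\
  exists e, forall i j, (i < j)%N -> c (q i) (q j) = e.
Proof.
have [e he] := unbounded_pigeonhole ramsey_colour unbounded_setT.
have hn n : exists k, (n < k)%N /\ ramsey_colour k = e.
  by have [k [lk [_ ck]]] := he n.+1; exists k.
have [nx hnx] := choice hn.
pose K := fix K i := if i is i.+1 then nx (K i) else nx 0%N.
have Kinc i : (K i < K i.+1)%N by exact: (proj1 (hnx _)).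
have Kmono i j : (i < j)%N -> (K i < K j)%N.
  elim: j => // j IH; rewrite ltnS leq_eqVlt => /orP[/eqP->//|/IH].
  by move/ltn_trans; apply.
have Ke i : ramsey_colour (K i) = e by case: i => [|i]; exact: (proj2 (hnx _)).
exists (fun i => ramsey_point (K i)); split.
  by move=> i; exact: (proj1 (ramsey_pointP (Kinc i))).
by exists e => i j ij; rewrite (proj2 (ramsey_pointP (Kmono _ _ ij))) Ke.
Qed.

End Ramsey.

Section Words.
Variables (A : finType) (R : realType).
Local Open Scope ring_scope.

Definition slice (w : nat -> A) (a b : nat) : seq A := [seq w k | k <- iota a (b - a)].
Definition wshift (w : nat -> A) (i : nat) : nat -> A := fun k => w (k + i)%N.
Definition factorization (p : nat -> nat) := p 0%N = 0%N /\ forall m, (p m < p m.+1)%N.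

Definition block_equiv (S : Type) (h : seq A -> S) (w w' : nat -> A) :=
  exists p p', [/\ factorization p, factorization p' &
    forall m, h (slice w (p m) (p m.+1)) = h (slice w' (p' m) (p' m.+1))].

Definition recognizable (F : (nat -> A) -> R) (eps : R) :=
  exists (S : finType) (h : seq A -> S), forall w w', block_equiv h w w' -> F w <= F w' + eps.

Lemma block_equiv_sym S (h : seq A -> S) w w' : block_equiv h w w' -> block_equiv h w' w.
Proof. by case=> p [p' [fp fp' H]]; exists p', p; split=> // m; rewrite H. Qed.

Lemma block_equiv_map S S' (h : seq A -> S) (f : S -> S') w w' :
  block_equiv h w w' -> block_equiv (fun u => f (h u)) w w'.
Proof. by case=> p [p' [fp fp' H]]; exists p, p'; split=> // m; rewrite H. Qed.

Lemma size_slice w a b : size (slice w a b) = (b - a)%N.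
Proof. by rewrite size_map size_iota. Qed.

Lemma slice_wshift w i a b : slice (wshift w i) a b = slice w (a + i) (b + i).
Proof.
rewrite /slice /wshift subnDr; move: (b - a)%N => n; elim: n a => [|n IH] a //=.
by rewrite IH addSn.
Qed.

Lemma drop_slice w a b o : drop o (slice w a b) = slice w (a + o) b.
Proof. by rewrite /slice -map_drop drop_iota subnDA. Qed.

Lemma ltn_ord_slice w a b (o : 'I_(size (slice w a b))) : (o < b - a)%N.
Proof. by rewrite -(size_slice w); exact: ltn_ord. Qed.

Lemma factorization_lt p : factorization p -> forall i j, (i < j)%N -> (p i < p j)%N.
Proof.
case=> _ H i j; elim: j => // j IH; rewrite ltnS leq_eqVlt => /orP[/eqP->//|/IH].
by move/ltn_trans; apply.
Qed.

Lemma factorization_le p : factorization p -> forall i j, (i <= j)%N -> (p i <= p j)%N.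
Proof.
move=> fp i j; rewrite leq_eqVlt => /orP[/eqP->//|/(factorization_lt fp)]; exact: ltnW.
Qed.

Lemma factorization_block p : factorization p -> forall i, exists m, (p m <= i < p m.+1)%N.
Proof.
case=> p0 H; elim=> [|i [m /andP[h1 h2]]]; first by exists 0%N; move: (H 0%N); rewrite p0.
case: (ltnP i.+1 (p m.+1)) => h3.
  by exists m; rewrite h3 andbT; apply: leq_trans h1 _.
exists m.+1; have e : p m.+1 = i.+1 by apply/eqP; rewrite eqn_leq h3 h2.
by rewrite {1}e leqnn /= -e.
Qed.

Lemma factorization_block_uniq p k l n : factorization p ->
  (p k <= n < p k.+1)%N -> (p l <= n < p l.+1)%N -> k = l.
Proof.
move=> fp /andP[k1 k2] /andP[l1 l2]; case: (ltngtP k l) => // kl.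
  by have := leq_trans k2 (leq_trans (factorization_le fp kl) l1); rewrite ltnn.
by have := leq_trans l2 (leq_trans (factorization_le fp kl) k1); rewrite ltnn.
Qed.

Lemma block_equiv_wshift S (h : seq A -> S) w w' p p' m o o' :
  factorization p -> factorization p' ->
  (forall k, h (slice w (p k) (p k.+1)) = h (slice w' (p' k) (p' k.+1))) ->
  (o < p m.+1 - p m)%N -> (o' < p' m.+1 - p' m)%N ->
  h (slice w (p m + o) (p m.+1)) = h (slice w' (p' m + o') (p' m.+1)) ->
  block_equiv h (wshift w (p m + o)) (wshift w' (p' m + o')).
Proof.
move=> fp fp' H ho ho' H0.
set i := (p m + o)%N; set i' := (p' m + o')%N.
have hi : (i < p m.+1)%N by rewrite /i -ltn_subRL.
have hi' : (i' < p' m.+1)%N by rewrite /i' -ltn_subRL.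
pose q k := if k is k.+1 then (p (m + k.+1) - i)%N else 0%N.
pose q' k := if k is k.+1 then (p' (m + k.+1) - i')%N else 0%N.
have hiq k : (i < p (m + k.+1))%N.
  by apply: leq_trans hi _; apply: factorization_le => //; rewrite addnS ltnS leq_addr.
have hiq' k : (i' < p' (m + k.+1))%N.
  by apply: leq_trans hi' _; apply: factorization_le => //; rewrite addnS ltnS leq_addr.
exists q, q'; split.
- split=> // [[|k]] /=; first by rewrite subn_gt0 addn1.
  by rewrite ltn_sub2r // [(m + k.+2)%N]addnS; apply: (proj2 fp).
- split=> // [[|k]] /=; first by rewrite subn_gt0 addn1.
  by rewrite ltn_sub2r // [(m + k.+2)%N]addnS; apply: (proj2 fp').
- case=> [|k] /=; rewrite !slice_wshift.
    by rewrite !add0n !subnK ?addn1 ?(ltnW hi) ?(ltnW hi').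
  have e1 : (m + k.+2 = (m + k.+1).+1)%N by rewrite addnS.
  rewrite !subnK ?(ltnW (hiq _)) ?(ltnW (hiq' _)) // e1; exact: H.
Qed.

End Words.

Section UntilColouring.
Variables (A S : finType) (h : seq A -> S).

(* An Until witness at offset [o] of a block needs the colour of the suffix at
   [o] and of the suffixes at all earlier offsets; blocks entirely before the
   witness only need the set of all their suffix colours. *)
Definition until_colouring (u : seq A) : S * {set S * {set S}} * {set S} :=
  (h u, [set (h (drop o u), [set h (drop o2 u) | o2 : 'I_(size u) & (o2 < o)%N]) | o : 'I_(size u)],
   [set h (drop o u) | o : 'I_(size u)]).

Section Matched.
Variables (w w' : nat -> A) (p p' : nat -> nat).
Hypotheses (fp : factorization p) (fp' : factorization p').
Hypothesis Hcol : forall k,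
  until_colouring (slice w (p k) (p k.+1)) = until_colouring (slice w' (p' k) (p' k.+1)).

Let Hh k : h (slice w (p k) (p k.+1)) = h (slice w' (p' k) (p' k.+1)).
Proof. exact: (congr1 (fun x => x.1.1) (Hcol k)). Qed.

Lemma until_colouring_before m (o : 'I_(size (slice w (p m) (p m.+1))))
    (o' : 'I_(size (slice w' (p' m) (p' m.+1)))) :
  [set h (drop o2 (slice w (p m) (p m.+1))) | o2 : 'I_(size (slice w (p m) (p m.+1))) & (o2 < o)%N]
  = [set h (drop o2 (slice w' (p' m) (p' m.+1))) | o2 : 'I_(size (slice w' (p' m) (p' m.+1))) & (o2 < o')%N] ->
  forall j', (j' < p' m + o')%N ->
  exists j, (j < p m + o)%N /\ block_equiv h (wshift w j) (wshift w' j').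
Proof.
set u := slice w (p m) (p m.+1); set u' := slice w' (p' m) (p' m.+1) => e2 j' hj'.
have pi k : (p k < p k.+1)%N := proj2 fp k.
have pi' k : (p' k < p' k.+1)%N := proj2 fp' k.
have [l /andP[l1 l2]] := factorization_block fp' j'.
have lm : (l <= m)%N.
  rewrite leqNgt; apply/negP => ml.
  have h2 : (p' m.+1 <= p' l)%N by apply: factorization_le.
  move: (ltn_ord_slice o'); rewrite ltn_subRL => h1.
  by move: (leq_trans (leq_trans h1 h2) l1); rewrite ltnNge (ltnW hj').
have hl' : (j' - p' l < size (slice w' (p' l) (p' l.+1)))%N by rewrite size_slice ltn_sub2r.
have [o2 [o2lt o2e]] : exists o2 : nat,
    (if l == m then (o2 < o)%N else (o2 < p l.+1 - p l)%N) /\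
    h (drop o2 (slice w (p l) (p l.+1))) = h (drop (j' - p' l) (slice w' (p' l) (p' l.+1))).
  case: eqP => [elm|nlm].
    move: l2 l1 hl'; rewrite elm => l2 l1 hl'.
    have : h (drop (j' - p' m) u') \in [set h (drop o2 u') | o2 : 'I_(size u') & (o2 < o')%N].
      apply/imsetP; exists (Ordinal hl') => //; rewrite inE /=.
      by rewrite -(ltn_add2l (p' m)) subnKC.
    by rewrite -e2 => /imsetP[o3]; rewrite inE => o3o ->; exists o3.
  have : h (drop (j' - p' l) (slice w' (p' l) (p' l.+1))) \in
         (until_colouring (slice w' (p' l) (p' l.+1))).2.
    by apply/imsetP; exists (Ordinal hl').
  rewrite -Hcol => /imsetP[o3 _ ->]; exists o3; split => //.
  exact: ltn_ord_slice.
exists (p l + o2)%N; split.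
  case: eqP o2lt => [->|nlm] o2lt; first by rewrite ltn_add2l.
  have lm' : (l < m)%N by rewrite ltn_neqAle lm andbT; apply/eqP.
  apply: leq_trans (leq_addr _ _); apply: leq_trans (factorization_le fp lm').
  by rewrite -ltn_subRL.
have -> : j' = (p' l + (j' - p' l))%N by rewrite subnKC.
apply: block_equiv_wshift => //.
- by case: eqP o2lt => [->|] o2lt //; apply: (ltn_trans o2lt); exact: ltn_ord_slice.
- by rewrite ltn_sub2r.
- by rewrite -!drop_slice o2e.
Qed.

Lemma until_colouring_match i : exists i',
  block_equiv h (wshift w i) (wshift w' i') /\
  forall j', (j' < i')%N -> exists j, (j < i)%N /\ block_equiv h (wshift w j) (wshift w' j').
Proof.
have [m /andP[m1 m2]] := factorization_block fp i.
set u := slice w (p m) (p m.+1); set u' := slice w' (p' m) (p' m.+1).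
have ho : (i - p m < size u)%N by rewrite size_slice ltn_sub2r // (proj2 fp).
pose o := Ordinal ho.
have : (h (drop o u), [set h (drop o2 u) | o2 : 'I_(size u) & (o2 < o)%N])
         \in (until_colouring u).1.2 by apply/imsetP; exists o.
rewrite [(until_colouring u).1.2](congr1 (fun x => x.1.2) (Hcol m)).
case/imsetP=> o' _ [e1 e2].
have -> : i = (p m + o)%N by rewrite /= subnKC.
exists (p' m + o')%N; split; last exact: (@until_colouring_before m o o' e2).
apply: block_equiv_wshift => //; first by rewrite /= ltn_sub2r // (proj2 fp).
  exact: ltn_ord_slice o'.
by rewrite -!drop_slice -/u -/u' e1.
Qed.

End Matched.

Lemma block_equiv_until w w' : block_equiv until_colouring w w' -> forall i, exists i',
  block_equiv h (wshift w i) (wshift w' i') /\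
  forall j', (j' < i')%N -> exists j, (j < i)%N /\ block_equiv h (wshift w j) (wshift w' j').
Proof. by case=> p [p' [fp fp' H]]; exact: (until_colouring_match fp fp' H). Qed.

End UntilColouring.

Section PrefixColouring.
Variables (A S : finType) (h : seq A -> S) (N : nat).

Definition prefix_colouring (u : seq A) : S * 'I_N.+1 * {ffun 'I_N -> S} :=
  (h u, inord (minn (size u) N), [ffun o : 'I_N => h (drop o u)]).

Section Matched.
Variables (w w' : nat -> A) (p p' : nat -> nat).
Hypotheses (fp : factorization p) (fp' : factorization p').
Hypothesis Hcol : forall k,
  prefix_colouring (slice w (p k) (p k.+1)) = prefix_colouring (slice w' (p' k) (p' k.+1)).

Let Hh k : h (slice w (p k) (p k.+1)) = h (slice w' (p' k) (p' k.+1)).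
Proof. exact: (congr1 (fun x => x.1.1) (Hcol k)). Qed.

Let block_size_min k : minn (p k.+1 - p k) N = minn (p' k.+1 - p' k) N.
Proof.
move: (congr1 (fun x => val x.1.2) (Hcol k)) => /=.
by rewrite !inordK ?ltnS ?geq_minr // !size_slice.
Qed.

Lemma prefix_colouring_boundary l : (p l < N)%N -> p' l = p l.
Proof.
elim: l => [|l IH] hl; first by rewrite (proj1 fp) (proj1 fp').
have hl0 : (p l < N)%N := ltn_trans (proj2 fp l) hl.
have lt : (p l.+1 - p l < N)%N := leq_ltn_trans (leq_subr _ _) hl.
have e := block_size_min l; rewrite (IH hl0) (minn_idPl (ltnW lt)) in e.
have lt' : (p' l.+1 - p l < N)%N.
  by move: lt; rewrite e; case: (leqP N (p' l.+1 - p l)) => _ //; rewrite ltnn.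
move: e; rewrite (minn_idPl (ltnW lt')) => e.
rewrite -[RHS](subnK (ltnW (proj2 fp l))) e subnK //.
by rewrite -(IH hl0) ltnW // (proj2 fp').
Qed.

Lemma prefix_colouring_match i : (i < N)%N -> block_equiv h (wshift w i) (wshift w' i).
Proof.
move=> iN; have [m /andP[m1 m2]] := factorization_block fp i.
have e0 : p' m = p m by apply: prefix_colouring_boundary; exact: leq_ltn_trans iN.
have oN : (i - p m < N)%N by apply: leq_ltn_trans iN; exact: leq_subr.
have ho : (i - p m < p m.+1 - p m)%N by rewrite ltn_sub2r // (proj2 fp).
have ho' : (i - p m < p' m.+1 - p' m)%N.
  have : (i - p m < minn (p m.+1 - p m) N)%N by rewrite leq_min ho oN.
  by rewrite block_size_min leq_min => /andP[].
have -> : i = (p m + (i - p m))%N by rewrite subnKC.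
rewrite -[in wshift w' _]e0.
apply: block_equiv_wshift => //; first by move: ho'; rewrite e0.
move: (congr1 (fun x : _ * {ffun _ -> _} => x.2 (Ordinal oN)) (Hcol m)); rewrite !ffunE /=.
by rewrite !drop_slice e0.
Qed.

End Matched.

Lemma block_equiv_prefix w w' : block_equiv prefix_colouring w w' ->
  forall i, (i < N)%N -> block_equiv h (wshift w i) (wshift w' i).
Proof. by case=> p [p' [fp fp' H]]; exact: (prefix_colouring_match fp fp' H). Qed.

End PrefixColouring.

Section RealBounds.
Variable R : realType.
Local Open Scope ring_scope.
Local Open Scope classical_set_scope.

Lemma sup_le_supD (X Y : set R) (e : R) : X !=set0 -> has_ubound Y ->
  (forall x, X x -> exists2 y, Y y & x <= y + e) -> sup X <= sup Y + e.
Proof.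
move=> nX bY H; apply: ge_sup => // x /H [y Yy lxy].
by apply: le_trans lxy _; rewrite lerD2r; exact: ub_le_sup.
Qed.

Lemma inf_le_infD (X Y : set R) (e : R) : Y !=set0 -> has_lbound X ->
  (forall y, Y y -> exists2 x, X x & x <= y + e) -> inf X <= inf Y + e.
Proof.
move=> nY bX H; rewrite -lerBlDr; apply: lb_le_inf => // y /H [x Xx lxy].
by rewrite lerBlDr; apply: le_trans lxy; exact: ge_inf.
Qed.

Lemma sup_in01 (X : set R) : X !=set0 -> (forall x, X x -> 0 <= x <= 1) ->
  0 <= sup X <= 1.
Proof.
move=> [x Xx] H; apply/andP; split.
  apply: le_trans (proj1 (andP (H x Xx))) _; apply: ub_le_sup => //.
  by exists 1 => z /H /andP[].
by apply: ge_sup; [exists x | move=> z /H /andP[]].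
Qed.

Lemma inf_in01 (X : set R) : X !=set0 -> (forall x, X x -> 0 <= x <= 1) ->
  0 <= inf X <= 1.
Proof.
move=> [x Xx] H; apply/andP; split.
  by apply: lb_le_inf; [exists x | move=> z /H /andP[]].
apply: le_trans (proj2 (andP (H x Xx))); apply: ge_inf => //.
by exists 0 => z /H /andP[].
Qed.

Lemma min_lt0 (F : nat -> R) : min_lt 0 F = 1.
Proof. exact: big_ord0. Qed.

Lemma min_ltS i (F : nat -> R) : min_lt i.+1 F = Num.min (F 0%N) (min_lt i (fun j => F j.+1)).
Proof. exact: big_ord_recl. Qed.

Lemma min_lt_le1 i (F : nat -> R) : min_lt i F <= 1.
Proof. by elim: i F => [|i IH] F; rewrite ?min_lt0 // min_ltS ge_min IH orbT. Qed.

Lemma min_lt_le i (F : nat -> R) j : (j < i)%N -> min_lt i F <= F j.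
Proof.
elim: i F j => // i IH F [|j] ji; rewrite min_ltS ge_min ?lexx //.
by rewrite IH ?orbT.
Qed.

Lemma min_lt_ge i (F : nat -> R) c : c <= 1 -> (forall j, (j < i)%N -> c <= F j) ->
  c <= min_lt i F.
Proof.
move=> c1 H; apply: (big_ind (fun x => c <= x)) => // [x y cx cy|j _].
  by rewrite le_min cx.
exact: H.
Qed.

Lemma min_le_minD (a b a' b' e : R) : a <= a' + e -> b <= b' + e ->
  Num.min a b <= Num.min a' b' + e.
Proof.
move=> h1 h2; case: (leP a' b') => h3.
  by apply: (le_trans _ h1); rewrite ge_min lexx.
by apply: (le_trans _ h2); rewrite ge_min lexx orbT.
Qed.

Lemma max_le_maxD (a b a' b' e : R) : a <= a' + e -> b <= b' + e ->
  Num.max a b <= Num.max a' b' + e.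
Proof.
move=> h1 h2; rewrite ge_max; apply/andP; split.
  by apply: le_trans h1 _; rewrite lerD2r le_max lexx.
by apply: le_trans h2 _; rewrite lerD2r le_max lexx orbT.
Qed.

Lemma mulr01_leD (c a b e : R) : 0 <= c <= 1 -> 0 <= e -> a <= b + e -> c * a <= c * b + e.
Proof.
move=> /andP[c0 c1] e0 h; apply: le_trans (ler_wpM2l c0 h) _.
by rewrite mulrDr lerD2l -[leRHS]mul1r ler_wpM2r.
Qed.

Lemma ratr01 (q : rat) : 0 <= q <= 1 -> 0 <= (ratr q : R) <= 1.
Proof.
case/andP=> q0 q1; rewrite ler0q q0 /=.
have : (ratr q <= ratr 1 :> R) by rewrite ler_rat.
by rewrite rmorph1.
Qed.

Lemma discounting01 eta i : discounting eta -> 0 <= (ratr (eta i) : R) <= 1.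
Proof. by case=> _ [H _]; apply: ratr01; case: (H i) => /ltW -> ->. Qed.

Lemma discounting_small eta (eps : R) : discounting eta -> 0 < eps ->
  exists N, forall i, (N <= i)%N -> ratr (eta i) < eps.
Proof.
case=> _ [_ lim] e0; have [k hk] : exists k : nat, 0 + k.+1%:R^-1 < eps by exact: ltr_add_invr.
have [N HN] := lim k.+1%:R^-1 (ltac:(by rewrite invr_gt0 ltr0n)).
exists N => i /HN; rewrite add0r in hk => etai; apply: lt_trans hk.
by rewrite -(ratr_nat R k.+1) -fmorphV ltr_rat.
Qed.

Section ImageDense.
Variables (T : Type) (X Y : set T) (F : T -> R).
Hypotheses (YX : Y `<=` X) (X0 : X !=set0).

Lemma sup_image_dense M : (forall t, X t -> F t <= M) ->
  (forall e, 0 < e -> forall t, X t -> exists2 t', Y t' & F t <= F t' + e) ->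
  sup [set x | exists2 t, X t & x = F t] = sup [set x | exists2 t, Y t & x = F t].
Proof.
move=> FM dense; have [t0 Xt0] := X0; apply/le_anti/andP; split.
  apply/ler_addgt0Pr => e e0; apply: sup_le_supD; first by exists (F t0), t0.
    by exists M => _ [t /YX Xt ->]; exact: FM.
  by move=> _ [t /(dense e e0) [t' Yt' le] ->]; exists (F t') => //; exists t'.
have [t1 Yt1 _] := dense 1 ltr01 t0 Xt0.
rewrite -[leRHS]addr0; apply: sup_le_supD; first by exists (F t1), t1.
  by exists M => _ [t Xt ->]; exact: FM.
by move=> _ [t Yt ->]; exists (F t); [exists t => //; exact: YX | rewrite addr0].
Qed.

Lemma inf_image_dense M : (forall t, X t -> M <= F t) ->
  (forall e, 0 < e -> forall t, X t -> exists2 t', Y t' & F t' <= F t + e) ->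
  inf [set x | exists2 t, X t & x = F t] = inf [set x | exists2 t, Y t & x = F t].
Proof.
move=> FM dense; have [t0 Xt0] := X0; have [t1 Yt1 _] := dense 1 ltr01 t0 Xt0.
apply/le_anti/andP; split.
  rewrite -[leRHS]addr0; apply: inf_le_infD; first by exists (F t1), t1.
    by exists M => _ [t Xt ->]; exact: FM.
  by move=> _ [t Yt ->]; exists (F t); [exists t => //; exact: YX | rewrite addr0].
apply/ler_addgt0Pr => e e0; apply: inf_le_infD; first by exists (F t0), t0.
  by exists M => _ [t /YX Xt ->]; exact: FM.
by move=> _ [t /(dense e e0) [t' Yt' le] ->]; exists (F t') => //; exists t'.
Qed.

End ImageDense.

End RealBounds.

Section Recognizable.
Variables (A : finType) (R : realType).
Local Open Scope ring_scope.
Local Open Scope classical_set_scope.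
Implicit Types (F G : (nat -> A) -> R) (eps : R).

Definition until_seq (f g : nat -> R) : R :=
  sup [set x | exists i : nat, x = Num.min (g i) (min_lt i f)].

Lemma until_seq_in01 f g : (forall i, 0 <= f i <= 1) -> (forall i, 0 <= g i <= 1) ->
  0 <= until_seq f g <= 1.
Proof.
move=> f01 g01; apply: sup_in01; first by eexists; exists 0%N.
move=> x [i ->]; rewrite le_min ge_min min_lt_le1 orbT andbT.
case/andP: (g01 i) => -> _ /=; apply: min_lt_ge => // j _.
by case/andP: (f01 j).
Qed.

Lemma until_seq_le f g f' g' e : 0 <= e ->
  (forall i, exists i', g i <= g' i' + e /\
     forall j', (j' < i')%N -> exists2 j, (j < i)%N & f j <= f' j' + e) ->
  until_seq f g <= until_seq f' g' + e.
Proof.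
move=> e0 H; apply: sup_le_supD; first by eexists; exists 0%N.
  by exists 1 => _ [i ->]; rewrite ge_min min_lt_le1 orbT.
move=> _ [i ->]; have [i' [gi fi]] := H i.
exists (Num.min (g' i') (min_lt i' f')); first by exists i'.
apply: min_le_minD => //; rewrite -lerBlDr; apply: min_lt_ge.
  by have := min_lt_le1 i f; lra.
move=> j' /fi [j ji fj]; rewrite lerBlDr; exact: le_trans (min_lt_le _ ji) fj.
Qed.

Lemma block_equiv_head w w' : block_equiv (fun u : seq A => ohead u) w w' -> w 0%N = w' 0%N.
Proof.
case=> p [p' [[p0 pi] [p0' pi'] H]]; move: (H 0%N); rewrite p0 p0' /slice !subn0.
move: (pi 0%N) (pi' 0%N); rewrite p0 p0'.
by case: (p 1%N) => // n _; case: (p' 1%N) => // n' _ /= [].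
Qed.

Lemma recognizable_head (f : A -> R) eps : 0 <= eps -> recognizable (fun w => f (w 0%N)) eps.
Proof.
by move=> e0; exists _, (fun u : seq A => ohead u) => w w' /block_equiv_head ->; rewrite lerDl.
Qed.

Lemma recognizable_compl F eps : recognizable F eps -> recognizable (fun w => 1 - F w) eps.
Proof.
case=> S [h H]; exists S, h => w w' /block_equiv_sym /H; lra.
Qed.

Lemma recognizable_max F G eps : recognizable F eps -> recognizable G eps ->
  recognizable (fun w => Num.max (F w) (G w)) eps.
Proof.
case=> S1 [h1 H1] [S2 [h2 H2]]; exists _, (fun u => (h1 u, h2 u)) => w w' hb.
by apply: max_le_maxD; [apply/H1/(block_equiv_map fst hb) | apply/H2/(block_equiv_map snd hb)].
Qed.

Lemma recognizable_next F eps : recognizable F eps ->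
  recognizable (fun w => F (wshift w 1)) eps.
Proof.
case=> S [h H]; exists _, (prefix_colouring h 2) => w w' hb.
exact/H/(block_equiv_prefix hb).
Qed.

Lemma recognizable_until F G eps : 0 <= eps ->
  recognizable F eps -> recognizable G eps ->
  recognizable (fun w => until_seq (fun j => F (wshift w j)) (fun i => G (wshift w i))) eps.
Proof.
move=> e0 [S1 [h1 H1]] [S2 [h2 H2]].
exists _, (until_colouring (fun u => (h1 u, h2 u))) => w w' hb.
apply: until_seq_le => // i; have [i' [b1 b2]] := block_equiv_until hb i.
exists i'; split; first exact/H2/(block_equiv_map snd b1).
by move=> j' /b2 [j [ji bj]]; exists j => //; exact/H1/(block_equiv_map fst bj).
Qed.

(* Beyond an index [N] where the discount drops below [eps], every term of the
   supremum is below [eps]: only the first [N] positions need to be matched. *)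
Lemma recognizable_duntil eta F G eps : discounting eta -> 0 < eps ->
  (forall w, 0 <= G w <= 1) -> recognizable F eps -> recognizable G eps ->
  recognizable (fun w => until_seq (fun j => ratr (eta j) * F (wshift w j))
                                   (fun i => ratr (eta i) * G (wshift w i))) eps.
Proof.
move=> deta e0 G01 [S1 [h1 H1]] [S2 [h2 H2]].
have [N HN] := discounting_small deta e0.
exists _, (prefix_colouring (fun u => (h1 u, h2 u)) N) => w w' hb.
have eta01 i := discounting01 R i deta.
apply: until_seq_le => [|i]; first exact: ltW.
case: (ltnP i N) => iN.
  exists i; split.
    apply: mulr01_leD; rewrite ?(ltW e0) //.
    exact/H2/(block_equiv_map snd (block_equiv_prefix hb iN)).
  move=> j ji; exists j => //; apply: mulr01_leD; rewrite ?(ltW e0) //.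
  exact/H1/(block_equiv_map fst (block_equiv_prefix hb (ltn_trans ji iN))).
exists 0%N; split => //.
have /andP[a0 a1] := eta01 i; have /andP[b0 b1] := G01 (wshift w i).
have /andP[c0 _] := eta01 0%N; have /andP[d0 _] := G01 (wshift w' 0).
have small : ratr (eta i) * G (wshift w i) <= ratr (eta i) by rewrite -[leRHS]mulr1 ler_wpM2l.
have := HN i iN; have := mulr_ge0 c0 d0; lra.
Qed.

End Recognizable.

Section Runs.
Variables (AP : finType) (K : kripke AP).
Local Notation ST := (St K).

Definition valid_run (s : nat -> ST) := s 0%N \in init K /\ forall i, trans (s i) (s i.+1).

Lemma valid_run_ex : exists s, valid_run s.
Proof.
have [x0 x0i] : exists x, x \in init K by apply/set0Pn; exact: init_nonempty.
pose nxt (x : ST) := xchoose (trans_total x).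
exists (fun k => iter k nxt x0); split => // k /=.
exact: (xchooseP (trans_total _)).
Qed.

Definition trans_path (t : seq ST) :=
  forall d j, (j.+1 < size t)%N -> trans (nth d t j) (nth d t j.+1).

Definition olast (t : seq ST) := if t is x :: t' then Some (last x t') else None.

Lemma trans_path_slice (s : nat -> ST) a b :
  (forall i, trans (s i) (s i.+1)) -> trans_path (slice s a b).
Proof.
move=> H d j hj; rewrite size_slice in hj.
rewrite !(nth_map 0%N) ?size_iota // ?(ltnW hj) // !nth_iota // ?(ltnW hj) //.
by rewrite addnS; apply: H.
Qed.

Lemma ohead_slice (s : nat -> ST) a b : (a < b)%N -> ohead (slice s a b) = Some (s a).
Proof. by rewrite -subn_gt0 /slice; case: (b - a)%N. Qed.

Lemma olast_slice (s : nat -> ST) a b : (a < b)%N -> olast (slice s a b) = Some (s b.-1).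
Proof.
move=> ab; rewrite /olast; case E: (slice s a b) => [|x t].
  by move: (size_slice s a b); rewrite E /= => /esym/eqP; rewrite subn_eq0 leqNgt ab.
have sz : (0 < b - a)%N by rewrite subn_gt0.
rewrite -[last x t]/(last x (x :: t)) -nth_last -E size_slice (nth_map 0%N) ?size_iota ?prednK //.
by rewrite nth_iota ?prednK // -subn1 addnBA // subnKC ?subn1 // ltnW.
Qed.

Lemma slice_glue (T : finType) (p : nat -> nat) (tt : nat -> seq T) (d : T) :
  factorization p -> (forall k, size (tt k) = (p k.+1 - p k)%N) ->
  exists s, forall k, slice s (p k) (p k.+1) = tt k.
Proof.
move=> fp stt; have [bi hbi] := choice (factorization_block fp).
exists (fun n => nth d (tt (bi n)) (n - p (bi n))) => k.
apply: (@eq_from_nth _ d); rewrite ?size_slice ?stt // => j hj.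
have hn : (p k <= p k + j < p k.+1)%N by rewrite leq_addr -ltn_subRL.
rewrite (nth_map 0%N) ?size_iota // nth_iota //.
by rewrite (factorization_block_uniq fp (hbi _) hn) addKn.
Qed.

Lemma valid_run_blocks p (s : nat -> ST) : factorization p -> s 0%N \in init K ->
  (forall k, trans_path (slice s (p k) (p k.+1))) ->
  (forall k, trans (s (p k.+1).-1) (s (p k.+1))) -> valid_run s.
Proof.
move=> fp s0 Hin Hbd; split => // n.
have [k /andP[k1 k2]] := factorization_block fp n.
case: (ltnP n.+1 (p k.+1)) => hn; last first.
  have e : p k.+1 = n.+1 by apply/eqP; rewrite eqn_leq hn k2.
  by have := Hbd k; rewrite e.
have k1' := leqW k1; have pk := proj2 fp k.
have := Hin k (s 0%N) (n - p k); rewrite size_slice -subSn // ltn_sub2r //.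
rewrite !(nth_map 0%N) ?size_iota ?ltn_sub2r ?(leq_ltn_trans _ hn) //.
rewrite !nth_iota ?ltn_sub2r ?(leq_ltn_trans _ hn) //.
by rewrite (subnKC k1) (subnKC (leqW k1)); apply.
Qed.

Section Projection.
Variables (A : finType) (mix : A -> ST -> A).

Definition mixw (w : nat -> A) (s : nat -> ST) : nat -> A := fun k => mix (w k) (s k).
Definition mix_seq (u : seq A) (t : seq ST) : seq A := [seq mix x.1 x.2 | x <- zip u t].

Lemma slice_mixw w s a b : slice (mixw w s) a b = mix_seq (slice w a b) (slice s a b).
Proof. by rewrite /mix_seq /slice zip_map -map_comp. Qed.

(* The end states of the paths are what allows paths chosen independently for
   each block to be glued into a run. *)
Definition run_colouring (S : finType) (h : seq A -> S) (u : seq A)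
  : {set S * option ST * option ST} :=
  [set x | `[< exists t, [/\ size t = size u, trans_path t &
                             x = (h (mix_seq u t), ohead t, olast t)] >]].

Lemma run_colouring_step (S : finType) (h : seq A -> S) w w' s :
  block_equiv (run_colouring h) w w' -> valid_run s ->
  exists s', valid_run s' /\ block_equiv h (mixw w s) (mixw w' s').
Proof.
case=> p [p' [fp fp' H]] [s0 sv].
have pk k : (p k < p k.+1)%N := proj2 fp k.
have pk' k : (p' k < p' k.+1)%N := proj2 fp' k.
have ex k : exists t, [/\ size t = (p' k.+1 - p' k)%N, trans_path t &
    (h (mix_seq (slice w (p k) (p k.+1)) (slice s (p k) (p k.+1))),
     Some (s (p k)), Some (s (p k.+1).-1)) =
    (h (mix_seq (slice w' (p' k) (p' k.+1)) t), ohead t, olast t)].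
  have : (h (mix_seq (slice w (p k) (p k.+1)) (slice s (p k) (p k.+1))),
          Some (s (p k)), Some (s (p k.+1).-1)) \in run_colouring h (slice w (p k) (p k.+1)).
    rewrite inE; apply/asboolP; exists (slice s (p k) (p k.+1)).
    by rewrite !size_slice ohead_slice ?olast_slice //; split=> //; exact: trans_path_slice.
  by rewrite H inE => /asboolP [t [st vt e]]; exists t; rewrite st size_slice.
have [tt htt] := choice ex.
have [s' hs'] : exists s', forall k, slice s' (p' k) (p' k.+1) = tt k.
  by apply: (slice_glue (s 0%N) fp') => k; case: (htt k).
have ends k : s' (p' k) = s (p k) /\ s' (p' k.+1).-1 = s (p k.+1).-1.
  case: (htt k) => _ _ [_]; rewrite -hs' ohead_slice ?olast_slice //.
  by case=> <- [<-].
exists s'; split.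
  apply: (valid_run_blocks fp'); first by rewrite -(proj1 fp') (proj1 (ends 0%N)) (proj1 fp).
    by move=> k; rewrite hs'; case: (htt k).
  move=> k; rewrite (proj2 (ends k)) (proj1 (ends k.+1)).
  by have := sv (p k.+1).-1; rewrite prednK // (leq_ltn_trans _ (pk k)).
exists p, p'; split => // k; rewrite !slice_mixw hs'.
by case: (htt k) => _ _ /(congr1 (fun x => x.1.1)).
Qed.

Section QuantifiedRuns.
Variable R : realType.
Local Open Scope ring_scope.
Local Open Scope classical_set_scope.
Variables (F : (nat -> A) -> R) (eps : R).
Hypotheses (F01 : forall w, 0 <= F w <= 1) (recF : recognizable F eps).

Lemma recognizable_inf_runs :
  recognizable (fun w => inf [set x | exists2 s, valid_run s & x = F (mixw w s)]) eps.
Proof.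
have [s0 vs0] := valid_run_ex; case: recF => S [h Hh].
exists _, (run_colouring h) => w w' hb; apply: inf_le_infD.
- by eexists; exists s0.
- by exists 0 => _ [s _ ->]; case/andP: (F01 (mixw w s)).
- move=> _ [s' vs' ->]; have [s [vs hb']] := run_colouring_step (block_equiv_sym hb) vs'.
  by exists (F (mixw w s)); [exists s | exact/Hh/block_equiv_sym].
Qed.

Lemma recognizable_sup_runs :
  recognizable (fun w => sup [set x | exists2 s, valid_run s & x = F (mixw w s)]) eps.
Proof.
have [s0 vs0] := valid_run_ex; case: recF => S [h Hh].
exists _, (run_colouring h) => w w' hb; apply: sup_le_supD.
- by eexists; exists s0.
- by exists 1 => _ [s _ ->]; case/andP: (F01 (mixw w' s)).
- move=> _ [s vs ->]; have [s' [vs' hb']] := run_colouring_step hb vs.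
  by exists (F (mixw w' s')); [exists s' | exact: Hh].
Qed.

End QuantifiedRuns.
End Projection.
End Runs.

Definition eventually_periodic (T : Type) (f : nat -> T) :=
  exists U P, (0 < P)%N /\ forall k, (U <= k)%N -> f (k + P)%N = f k.

Section Periodic.
Variables (T : Type) (f : nat -> T) (U P : nat).
Hypothesis fP : forall k, (U <= k)%N -> f (k + P)%N = f k.

Lemma periodicM n k : (U <= k)%N -> f (k + n * P)%N = f k.
Proof.
elim: n k => [|n IH] k hk; first by rewrite mul0n addn0.
by rewrite mulSnr addnA fP ?IH // (leq_trans hk (leq_addr _ _)).
Qed.

Lemma periodic_mod k : (0 < P)%N -> (U <= k)%N -> f k = f (U + (k - U) %% P)%N.
Proof.
move=> P0 hk; have e : k = ((U + (k - U) %% P) + (k - U) %/ P * P)%N.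
  by rewrite -addnA (addnC _ (_ * _)) -divn_eq subnKC.
by rewrite {1}e periodicM // leq_addr.
Qed.

End Periodic.

Lemma is_lassoP (AP : finType) (R : realType) (t : trace AP R) :
  is_lasso t <-> eventually_periodic t.
Proof.
split=> [[u [v [nv Ht]]]|[U [P [P0 H]]]].
  have sv0 : (0 < size v)%N by rewrite lt0n size_eq0.
  exists (size u), (size v); split => // k hk.
  rewrite !Ht ltnNge (leq_trans hk (leq_addr _ _)) /= ltnNge hk /=.
  by rewrite addnC -addnBA // modnDl.
exists [seq t k | k <- iota 0 U], [seq t k | k <- iota U P]; split.
  by rewrite -size_eq0 size_map size_iota -lt0n.
move=> i; rewrite !size_map !size_iota; case: ltnP => hi.
  by rewrite (nth_map 0%N) ?size_iota // nth_iota.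
rewrite (nth_map 0%N) ?size_iota ?ltn_pmod // nth_iota ?ltn_pmod //.
exact: (periodic_mod H).
Qed.

Lemma eq_slice (A : finType) (f g : nat -> A) a b a' b' :
  (b - a = b' - a')%N -> (forall j, (j < b - a)%N -> f (a + j)%N = g (a' + j)%N) ->
  slice f a b = slice g a' b'.
Proof.
move=> e H; rewrite /slice -e -(addn0 a) -(addn0 a') !iotaDl -!map_comp !addn0.
by apply/eq_in_map => j; rewrite mem_iota add0n => /andP[_ /H].
Qed.

Section LoopBack.
Variables (T : Type) (s : nat -> T) (a1 a2 : nat).
Hypothesis a12 : (a1 < a2)%N.

Definition loop_back (k : nat) : T :=
  if (k < a1)%N then s k else s (a1 + (k - a1) %% (a2 - a1))%N.

Lemma loop_back_lt k : (k < a2)%N -> loop_back k = s k.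
Proof.
move=> hk; rewrite /loop_back; case: ltnP => // h1.
by rewrite modn_small ?subnKC // ltn_sub2r.
Qed.

Lemma loop_back_ge k : (a1 <= k)%N -> loop_back k = s (a1 + (k - a1) %% (a2 - a1))%N.
Proof. by move=> hk; rewrite /loop_back ltnNge hk. Qed.

Lemma loop_back_periodic k : (a1 <= k)%N -> loop_back (k + (a2 - a1))%N = loop_back k.
Proof.
by move=> hk; rewrite !loop_back_ge ?(leq_trans hk) ?leq_addr // -addnBAC // modnDr.
Qed.

Lemma eventually_periodic_loop_back : eventually_periodic loop_back.
Proof. by exists a1, (a2 - a1)%N; split; [rewrite subn_gt0 | exact: loop_back_periodic]. Qed.

End LoopBack.

Lemma valid_run_loop_back (AP : finType) (K : kripke AP) (s : nat -> St K) a1 a2 :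
  valid_run s -> (a1 < a2)%N -> s a1 = s a2 -> valid_run (loop_back s a1 a2).
Proof.
case=> s0 sv h12 e; split; first by rewrite loop_back_lt // (leq_ltn_trans _ h12).
move=> k; case: (ltnP k.+1 a2) => hk; first by rewrite !loop_back_lt // ltnW.
have k1 : (a1 <= k)%N by rewrite -ltnS (leq_trans h12 hk).
rewrite !loop_back_ge ?(leq_trans k1) // subSn //.
set d := (a2 - a1)%N; have d0 : (0 < d)%N by rewrite subn_gt0.
set j := ((k - a1) %% d)%N; have jd : (j < d)%N by rewrite ltn_pmod.
have -> : ((k - a1).+1 %% d = j.+1 %% d)%N by rewrite -addn1 -modnDml addn1.
suff -> : s (a1 + j.+1 %% d)%N = s (a1 + j).+1 by apply: sv.
case: (ltngtP j.+1 d) => hj.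
- by rewrite modn_small // addnS.
- by move: hj; rewrite ltnNge jd.
- by rewrite hj modnn addn0 -addnS hj subnKC // ltnW.
Qed.

Lemma ramsey_cycle (A T S : finType) (h : seq A -> S) (z : nat -> A) (s : nat -> T) U P :
  (0 < P)%N -> exists Q : nat -> nat, [/\ forall k, (Q k < Q k.+1)%N, (U < Q 0%N)%N,
    s (Q 0%N) = s (Q 1%N), (Q 0%N = Q 1%N %[mod P])
  & forall k, h (slice z (Q k) (Q k.+1)) = h (slice z (Q 0%N) (Q 1%N))].
Proof.
move=> P0; pose f a := (s a, Ordinal (ltn_pmod a P0)).
pose c a b := (h (slice z a b), f a, f b).
have [q [qinc [e he]]] := ramsey c.
have qge k : (k <= q k)%N by elim: k => // k IH; exact: leq_ltn_trans IH (qinc k).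
pose Q k := q (k + U).+1.
have hQ k l : (k < l)%N -> c (Q k) (Q l) = e.
  by move=> kl; apply: (he (k + U).+1 (l + U).+1); rewrite ltnS ltn_add2r.
have fQ : f (Q 0%N) = f (Q 1%N).
  by have := congr1 (fun x => x.1.2) (hQ 1%N 2%N isT); rewrite -(hQ 0%N 1%N isT).
exists Q; split.
- by move=> k; rewrite /Q addSn; apply: qinc.
- exact: leq_trans (qge _).
- exact: (congr1 fst fQ).
- exact: (congr1 (fun x => val x.2) fQ).
- move=> k; have := congr1 (fun x => x.1.1) (hQ k k.+1 (ltnSn k)).
  by rewrite -(congr1 (fun x => x.1.1) (hQ 0%N 1%N isT)).
Qed.

Section LassoStep.
Variables (AP : finType) (K : kripke AP) (A : finType) (mix : A -> St K -> A).

(* Loop back between the first two positions of [ramsey_cycle]: all later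
   blocks of [s] have the colour of that loop, and the residue condition makes
   the loop compatible with the period of [w]. *)
Lemma lasso_step (S : finType) (h : seq A -> S) w s :
  eventually_periodic w -> valid_run s ->
  exists s', [/\ valid_run s', eventually_periodic s' &
                 block_equiv h (mixw mix w s) (mixw mix w s')].
Proof.
case=> U [P [P0 HP]] vs.
have [Q [Qinc UQ sQ mQ hQ]] := ramsey_cycle h (mixw mix w s) s U P0.
set a1 := Q 0%N in UQ sQ mQ hQ *; set a2 := Q 1%N in sQ mQ hQ *.
have h12 : (a1 < a2)%N := Qinc 0%N.
set d := (a2 - a1)%N; have d0 : (0 < d)%N by rewrite subn_gt0.
have Pd : (P %| d)%N by rewrite -eqn_mod_dvd ?(ltnW h12) // mQ.
exists (loop_back s a1 a2); split; [exact: valid_run_loop_back | exact: eventually_periodic_loop_back |].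
pose p k := if k is k'.+1 then Q k' else 0%N.
pose p' k := if k is k'.+1 then (a1 + k' * d)%N else 0%N.
exists p, p'; split.
- by split => // [[|k]] //=; exact: leq_ltn_trans _ UQ.
- split => // [[|k]] /=; first by rewrite mul0n addn0; exact: leq_ltn_trans _ UQ.
  by rewrite ltn_add2l mulSnr -[X in (X < _)%N]addn0 ltn_add2l.
case=> [|k] /=.
  congr h; apply: eq_slice => [|j hj]; first by rewrite mul0n addn0.
  by rewrite !add0n /mixw loop_back_lt // (ltn_trans _ h12) // -(subn0 a1).
rewrite hQ; congr h; apply: eq_slice => [|j hj]; first by rewrite subnDl mulSnr addKn.
rewrite /mixw loop_back_ge -?addnA ?leq_addr //.
have -> : (a1 + (k * d + j) - a1 = k * d + j)%N by rewrite addKn.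
rewrite -/d modnMDl (modn_small hj).
congr mix; rewrite (addnC (k * d)) addnA -(divnK Pd) mulnA (periodicM HP) //.
by apply: leq_trans (ltnW UQ) (leq_addr _ _).
Qed.

End LassoStep.

Lemma eventually_periodic_ffun (I T : finType) (c : I -> nat -> T) :
  (forall j, eventually_periodic (c j)) -> eventually_periodic (fun k => [ffun j => c j k]).
Proof.
move=> H; have H2 j : exists UP : nat * nat, (0 < UP.2)%N /\
    forall k, (UP.1 <= k)%N -> c j (k + UP.2)%N = c j k.
  by case: (H j) => U [P HP]; exists (U, P).
have [g hg] := choice H2.
exists (\max_j (g j).1), (\prod_j (g j).2); split.
  by apply: prodn_gt0 => j; case: (hg j).
move=> k hk; apply/ffunP => j; rewrite !ffunE (bigD1 j) //= mulnC.
apply: (periodicM (proj2 (hg j))); apply: leq_trans hk.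
exact: (@leq_bigmax _ (fun j => (g j).1) j).
Qed.

Section VariableBound.
Variable AP : Type.

Fixpoint vars_below (m : nat) (g : hform AP) : Prop :=
  match g with
  | Forall pi g | Exists pi g => (pi < m)%N /\ vars_below m g
  | QF f => forall x, qf_fv f x -> (x < m)%N
  end.

Lemma vars_below_fv m g x : vars_below m g -> hform_fv g x -> (x < m)%N.
Proof.
elim: g => [pi g IH|pi g IH|f] /=; try by case=> _ /IH H /andP[_ /H].
by move=> H /H.
Qed.

Lemma vars_below_mono m m' g : (m <= m')%N -> vars_below m g -> vars_below m' g.
Proof.
move=> mm'; elim: g => [pi g IH|pi g IH|f] /=.
- by case=> h1 /IH h2; split => //; exact: leq_trans h1 mm'.
- by case=> h1 /IH h2; split => //; exact: leq_trans h1 mm'.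
- by move=> H x /H h; exact: leq_trans h mm'.
Qed.

Lemma qf_vars_below_ex (f : qf AP) : exists m, forall x, qf_fv f x -> (x < m)%N.
Proof.
elim: f => [p pi|g [m H]|g [m1 H1] h [m2 H2]|g [m H]|g [m1 H1] h [m2 H2]|eta g [m1 H1] h [m2 H2]] /=;
  try by exists m.
- by exists pi.+1 => x /eqP <-.
all: by exists (maxn m1 m2) => x /orP[/H1|/H2] hx; rewrite leq_max hx ?orbT.
Qed.

Lemma vars_below_ex g : exists m, vars_below m g.
Proof.
elim: g => [pi g [m H]|pi g [m H]|f] /=; last exact: qf_vars_below_ex.
all: exists (maxn m pi.+1); rewrite leq_max ltnSn orbT; split => //.
all: by apply: vars_below_mono H; rewrite leq_maxl.
Qed.

End VariableBound.

Section Coincidence.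
Variables (AP : finType) (R : realType).
Local Open Scope ring_scope.
Implicit Types Pi : assignment AP R.

Lemma qf_sem_coinc (f : qf AP) Pi1 Pi2 :
  (forall x, qf_fv f x -> Pi1 x = Pi2 x) -> qf_sem f Pi1 = qf_sem f Pi2.
Proof.
elim: f Pi1 Pi2 => [p pi|g IH|g IHg h IHh|g IH|g IHg h IHh|eta g IHg h IHh] Pi1 Pi2 H /=.
- by rewrite H //= eqxx.
- by rewrite (IH Pi1 Pi2 H).
- by rewrite (IHg Pi1 Pi2) ?(IHh Pi1 Pi2) // => x hx; apply: H; apply/orP; by [left|right].
- by rewrite (IH (shift Pi1 1) (shift Pi2 1)) // => x hx; rewrite /shift H.
- have E1 i : qf_sem h (shift Pi1 i) = qf_sem h (shift Pi2 i).
    by apply: IHh => x hx; rewrite /shift H //; apply/orP; right.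
  have E2 : (fun j => qf_sem g (shift Pi1 j)) = (fun j => qf_sem g (shift Pi2 j)).
    by apply/funext => j; apply: IHg => x hx; rewrite /shift H //; apply/orP; left.
  by congr sup; apply/seteqP; split => x [i ->]; exists i; rewrite E1 E2.
- have E1 i : qf_sem h (shift Pi1 i) = qf_sem h (shift Pi2 i).
    by apply: IHh => x hx; rewrite /shift H //; apply/orP; right.
  have E2 : (fun j => ratr (eta j) * qf_sem g (shift Pi1 j)) =
            (fun j => ratr (eta j) * qf_sem g (shift Pi2 j)).
    by apply/funext => j; rewrite (IHg _ (shift Pi2 j)) // => x hx; rewrite /shift H //; apply/orP; left.
  by congr sup; apply/seteqP; split => x [i ->]; exists i; rewrite E1 E2.
Qed.

Lemma sem_coinc (T : set (trace AP R)) (g : hform AP) Pi1 Pi2 :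
  (forall x, hform_fv g x -> Pi1 x = Pi2 x) -> sem T g Pi1 = sem T g Pi2.
Proof.
have upd pi Pi1' Pi2' t (g' : hform AP) :
    (forall x, (pi != x) && hform_fv g' x -> Pi1' x = Pi2' x) ->
    forall x, hform_fv g' x -> update Pi1' pi t x = update Pi2' pi t x.
  move=> H x hx; rewrite /update; case: eqP => // ne; apply: H; rewrite hx andbT.
  by apply/eqP => e; apply: ne; rewrite e.
elim: g Pi1 Pi2 => [pi g IH|pi g IH|f] Pi1 Pi2 H /=; last exact: qf_sem_coinc.
  by congr inf; apply/seteqP; split => x [t Tt ->]; exists t => //; apply: IH; apply: upd => // y /H.
by congr sup; apply/seteqP; split => x [t Tt ->]; exists t => //; apply: IH; apply: upd => // y /H.
Qed.

End Coincidence.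

Section WordSemantics.
Variables (AP : finType) (R : realType) (K : kripke AP) (m : nat).
Local Open Scope ring_scope.
Local Open Scope classical_set_scope.
Local Notation ST := (St K).
Local Notation letter := {ffun 'I_m -> ST}.

Definition run_trace (s : nat -> ST) : trace AP R := fun k p => ratr (lab (s k) p).

(* Track [i] of a word is the run assigned to variable [i]; variables [>= m]
   are unassigned. *)
Definition word_assign (w : nat -> letter) : assignment AP R :=
  fun x => omap (fun i => run_trace (fun k => w k i)) (insub x : option 'I_m).

Definition set_track (i : 'I_m) (x : letter) (st : ST) : letter :=
  [ffun j => if j == i then st else x j].

Lemma shift_word_assign w : shift (word_assign w) = fun i => word_assign (wshift w i).
Proof. by apply/funext => i; apply/funext => x; rewrite /shift /word_assign; case: insub. Qed.

Lemma update_word_assign w i s :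
  update (word_assign w) (val i) (run_trace s) = word_assign (mixw (set_track i) w s).
Proof.
apply/funext => x; rewrite /update /word_assign; case: eqP => [->|ne].
  by rewrite valK /=; congr Some; apply/funext => k; apply/funext => q;
     rewrite /run_trace /mixw /set_track ffunE eqxx.
case: insubP => //= j _ ej; congr Some; apply/funext => k; apply/funext => q.
by rewrite /run_trace /mixw /set_track ffunE; case: eqP => // eji; case: ne; rewrite -ej eji.
Qed.

Lemma traces_ofP t : traces_of R K t <-> exists2 s, valid_run s & t = run_trace s.
Proof.
split=> [[s [h1 [h2 h3]]]|[s [h1 h2] ->]]; exists s => //.
by apply/funext => k; apply/funext => q; rewrite h3.
Qed.

Lemma lassos_ofP t : lassos_of R K t <->
  exists s, [/\ valid_run s, eventually_periodic s & t = run_trace s].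
Proof.
split=> [[/traces_ofP [s vs ->] /is_lassoP [U [P [P0 tP]]]]|[s [vs [U [P [P0 sP]]] ->]]].
  (* Two of the states at times U + k P coincide: loop back between them. *)
  have [st hst] := unbounded_pigeonhole (fun k => s (U + k * P)%N) unbounded_setT.
  have [a [_ [_ sa]]] := hst 0%N; have [b [ab [_ sb]]] := hst a.+1.
  have a12 : (U + a * P < U + b * P)%N by rewrite ltn_add2l ltn_pmul2r.
  exists (loop_back s (U + a * P) (U + b * P)); split.
  - by apply: valid_run_loop_back => //; rewrite sa sb.
  - exact: eventually_periodic_loop_back.
  apply/funext => k; case: (ltnP k (U + a * P)) => hk; first by rewrite /run_trace /loop_back hk.
  have d_eq : (U + b * P - (U + a * P) = (b - a) * P)%N by rewrite subnDl mulnBl.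
  have per n : (U + a * P <= n)%N ->
      run_trace s (n + (U + b * P - (U + a * P)))%N = run_trace s n.
    by move=> hn; rewrite d_eq (periodicM tP) // (leq_trans (leq_addr _ _) hn).
  rewrite (periodic_mod per) ?d_eq ?muln_gt0 ?subn_gt0 ?ab ?P0 //.
  by rewrite /run_trace loop_back_ge // d_eq.
split; first by apply/traces_ofP; exists s.
by apply/is_lassoP; exists U, P; split => // k hk; rewrite /run_trace sP.
Qed.

Definition word_sem (f : qf AP) (w : nat -> letter) : R := qf_sem f (word_assign w).

Lemma word_sem_Next g : word_sem (Next g) = fun w => word_sem g (wshift w 1).
Proof. by apply/funext => w; rewrite /word_sem /= shift_word_assign. Qed.

Lemma word_sem_Until g h : word_sem (Until g h) =
  fun w => until_seq (fun j => word_sem g (wshift w j)) (fun i => word_sem h (wshift w i)).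
Proof. by apply/funext => w; rewrite /word_sem /= shift_word_assign. Qed.

Lemma word_sem_DUntil eta g h : word_sem (DUntil eta g h) =
  fun w => until_seq (fun j => ratr (eta j) * word_sem g (wshift w j))
                     (fun i => ratr (eta i) * word_sem h (wshift w i)).
Proof. by apply/funext => w; rewrite /word_sem /= shift_word_assign. Qed.

Lemma word_sem_in01 f w : qf_wf f -> 0 <= word_sem f w <= 1.
Proof.
elim: f w => [p pi|g IH|g IHg h IHh|g IH|g IHg h IHh|eta g IHg h IHh] w /= wf.
- rewrite /word_sem /= /word_assign; case: insub => [i|] /=; last by rewrite lexx ler01.
  exact/ratr01/lab_range.
- by rewrite /word_sem /=; case/andP: (IH w wf) => h1 h2; rewrite subr_ge0 h2 lerBlDr lerDl h1.
- case: wf => w1 w2; rewrite /word_sem /= le_max ge_max.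
  by case/andP: (IHg w w1) => -> ->; case/andP: (IHh w w2) => -> ->.
- by rewrite word_sem_Next; exact: IH.
- by case: wf => w1 w2; rewrite word_sem_Until; apply: until_seq_in01 => i; [apply: IHg | apply: IHh].
case: wf => we [w1 w2]; rewrite word_sem_DUntil.
apply: until_seq_in01 => i; have /andP[e0 e1] := discounting01 R i we.
  have /andP[v0 v1] := IHg (wshift w i) w1.
  by rewrite mulr_ge0 //= mulr_ile1.
have /andP[v0 v1] := IHh (wshift w i) w2.
by rewrite mulr_ge0 //= mulr_ile1.
Qed.

Lemma word_sem_recognizable f eps : qf_wf f -> 0 < eps -> recognizable (word_sem f) eps.
Proof.
move=> + e0; elim: f => [p pi|g IH|g IHg h IHh|g IH|g IHg h IHh|eta g IHg h IHh] /= wf.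
- have -> : word_sem (Prop_ p pi) =
      fun w => if insub pi is Some i then ratr (lab (w 0%N i) p) else 0.
    by apply/funext => w; rewrite /word_sem /= /word_assign; case: insub.
  exact: (recognizable_head (fun x : letter =>
            if insub pi is Some i then ratr (lab (x i) p) else 0) (ltW e0)).
- exact: recognizable_compl (IH wf).
- by case: wf => /IHg hg /IHh hh; exact: recognizable_max hg hh.
- by rewrite word_sem_Next; exact: recognizable_next (IH wf).
- by case: wf => /IHg hg /IHh hh; rewrite word_sem_Until; exact: recognizable_until (ltW e0) hg hh.
case: wf => we [w1 w2]; rewrite word_sem_DUntil.
apply: (recognizable_duntil we e0) (IHg w1) (IHh w2) => w.
exact: word_sem_in01.
Qed.

End WordSemantics.

Section QuantifiedWordSemantics.
Variables (AP : finType) (R : realType) (K : kripke AP) (m : nat).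
Local Open Scope ring_scope.
Local Open Scope classical_set_scope.
Local Notation letter := {ffun 'I_m -> St K}.

Definition hword_sem (g : hform AP) (w : nat -> letter) : R :=
  sem (traces_of R K) g (word_assign R w).

Lemma image_traces_word (g : hform AP) w (i : 'I_m) :
  [set x | exists2 t, traces_of R K t & x = sem (traces_of R K) g (update (word_assign R w) i t)]
  = [set x | exists2 s, valid_run s & x = hword_sem g (mixw (set_track i) w s)].
Proof.
apply/seteqP; split => x.
  by case=> t /traces_ofP [s vs ->] ->; exists s; rewrite // /hword_sem -update_word_assign.
case=> s vs ->; exists (run_trace R s); first by apply/traces_ofP; exists s.
by rewrite /hword_sem update_word_assign.
Qed.

Lemma hword_sem_Forall pi g (hpi : (pi < m)%N) : hword_sem (Forall pi g) =
  fun w => inf [set x | exists2 s, valid_run s & x = hword_sem g (mixw (set_track (Ordinal hpi)) w s)].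
Proof. by apply/funext => w; rewrite -image_traces_word. Qed.

Lemma hword_sem_Exists pi g (hpi : (pi < m)%N) : hword_sem (Exists pi g) =
  fun w => sup [set x | exists2 s, valid_run s & x = hword_sem g (mixw (set_track (Ordinal hpi)) w s)].
Proof. by apply/funext => w; rewrite -image_traces_word. Qed.

Lemma hword_sem_in01 g w : hform_wf g -> vars_below m g -> 0 <= hword_sem g w <= 1.
Proof.
have [s0 vs0] := valid_run_ex K.
elim: g w => [pi g IH|pi g IH|f] w /= wf; last by move=> _; exact: word_sem_in01.
  case=> hpi vb; rewrite hword_sem_Forall; apply: inf_in01; first by eexists; exists s0.
  by move=> x [s _ ->]; apply: IH.
case=> hpi vb; rewrite hword_sem_Exists; apply: sup_in01; first by eexists; exists s0.
by move=> x [s _ ->]; apply: IH.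
Qed.

Lemma hword_sem_recognizable g eps : hform_wf g -> vars_below m g -> 0 < eps ->
  recognizable (hword_sem g) eps.
Proof.
move=> + + e0; elim: g => [pi g IH|pi g IH|f] /= wf; last by move=> _; exact: word_sem_recognizable.
  case=> hpi vb; rewrite hword_sem_Forall.
  by apply: recognizable_inf_runs (IH wf vb) => w; exact: hword_sem_in01.
case=> hpi vb; rewrite hword_sem_Exists.
by apply: recognizable_sup_runs (IH wf vb) => w; exact: hword_sem_in01.
Qed.

End QuantifiedWordSemantics.

Section LassoSemantics.
Variables (AP : finType) (R : realType) (K : kripke AP).
Local Open Scope ring_scope.
Local Open Scope classical_set_scope.
Local Notation TT := (traces_of R K).
Local Notation LL := (lassos_of R K).

Variables (m pi : nat) (g : hform AP) (Pi : assignment AP R).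
Hypotheses (hpi : (pi < m)%N) (wf : hform_wf g) (vb : vars_below m g).
Hypothesis PiL : forall x, (pi != x) && hform_fv g x -> exists t, Pi x = Some t /\ LL t.

Lemma lasso_assignment_word : exists w : nat -> {ffun 'I_m -> St K},
  eventually_periodic w /\ forall s, valid_run s ->
    sem TT g (update Pi pi (run_trace R s)) = hword_sem R g (mixw (set_track (Ordinal hpi)) w s).
Proof.
have [s0 vs0] := valid_run_ex K.
have hc (j : 'I_m) : exists r : nat -> St K, eventually_periodic r /\
    ((pi != val j) && hform_fv g (val j) -> Pi (val j) = Some (run_trace R r)).
  case: (boolP ((pi != val j) && hform_fv g (val j))) => hj; last first.
    by exists (fun _ => s0 0%N); split => //; exists 0%N, 1%N.
  have [t [-> /lassos_ofP [r [_ pr ->]]]] := PiL hj.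
  by exists r.
have [c hc'] := choice hc.
exists (fun k => [ffun j => c j k]); split.
  by apply: eventually_periodic_ffun => j; case: (hc' j).
move=> s vs; rewrite /hword_sem -update_word_assign /=; apply: sem_coinc => x hx.
rewrite /update; case: eqP => // ne.
have xm : (x < m)%N by apply: vars_below_fv vb hx.
rewrite /word_assign insubT /=; case: (hc' (Sub x xm)) => _ ->; last first.
  by rewrite /= hx andbT; apply/eqP => e; apply: ne; rewrite e.
by congr (Some (run_trace R _)); apply/funext => k; rewrite ffunE.
Qed.

Lemma lassos_approximate_traces :
  (forall t, TT t -> 0 <= sem TT g (update Pi pi t) <= 1) /\
  forall e, 0 < e -> forall t, TT t -> exists2 t', LL t' &
    sem TT g (update Pi pi t) <= sem TT g (update Pi pi t') + e /\
    sem TT g (update Pi pi t') <= sem TT g (update Pi pi t) + e.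
Proof.
have [w [pw E]] := lasso_assignment_word; split.
  by move=> _ /traces_ofP [s vs ->]; rewrite E //; exact: hword_sem_in01.
move=> e e0 _ /traces_ofP [s vs ->].
have [S [h Hh]] := hword_sem_recognizable K wf vb e0.
have [s' [vs' ps' hb]] := lasso_step (set_track (Ordinal hpi)) h pw vs.
exists (run_trace R s'); first by apply/lassos_ofP; exists s'.
by rewrite !E //; split; apply: Hh => //; exact: block_equiv_sym.
Qed.

Hypothesis IHg : forall Pi' : assignment AP R,
  (forall x, hform_fv g x -> exists t, Pi' x = Some t /\ LL t) -> sem TT g Pi' = sem LL g Pi'.

Let image_lassos :
  [set x | exists2 t, LL t & x = sem LL g (update Pi pi t)] =
  [set x | exists2 t, LL t & x = sem TT g (update Pi pi t)].
Proof.
apply/seteqP; split => _ [t Lt ->]; exists t => //; rewrite IHg // => x hx;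
  rewrite /update; case: eqP => [_|ne]; try by exists t.
all: by apply: PiL; rewrite hx andbT; apply/eqP => e; apply: ne; rewrite e.
Qed.

Let lassos_traces : LL `<=` TT.
Proof. by move=> t []. Qed.

Let traces0 : TT !=set0.
Proof. by have [s vs] := valid_run_ex K; exists (run_trace R s); apply/traces_ofP; exists s. Qed.

Lemma sem_Forall_lassos : sem TT (Forall pi g) Pi = sem LL (Forall pi g) Pi.
Proof.
have [bnd dense] := lassos_approximate_traces.
rewrite /= image_lassos; apply: (inf_image_dense lassos_traces traces0 (M := 0)).
  by move=> t /bnd /andP[].
by move=> e e0 t Tt; have [t' Lt' [_ le]] := dense e e0 t Tt; exists t'.
Qed.

Lemma sem_Exists_lassos : sem TT (Exists pi g) Pi = sem LL (Exists pi g) Pi.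
Proof.
have [bnd dense] := lassos_approximate_traces.
rewrite /= image_lassos; apply: (sup_image_dense lassos_traces traces0 (M := 1)).
  by move=> t /bnd /andP[].
by move=> e e0 t Tt; have [t' Lt' [le _]] := dense e e0 t Tt; exists t'.
Qed.

End LassoSemantics.

Lemma sem_traces_lassos (AP : finType) (R : realType) (K : kripke AP) m (psi : hform AP) :
  hform_wf psi -> vars_below m psi -> forall Pi : assignment AP R,
  (forall x, hform_fv psi x -> exists t, Pi x = Some t /\ lassos_of R K t) ->
  sem (traces_of R K) psi Pi = sem (lassos_of R K) psi Pi.
Proof.
elim: psi => [pi g IH|pi g IH|f] //= wf [hpi vb] Pi PiL.
  exact: (sem_Forall_lassos hpi wf vb PiL (IH wf vb)).
exact: (sem_Exists_lassos hpi wf vb PiL (IH wf vb)).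
Qed.

Unset Implicit Arguments.

Theorem mainTheorem8 (AP : finType) (R : realType) (psi : hform AP)
  (K : kripke AP) (Pi : assignment AP R) :
  hform_wf psi ->
  (forall x, hform_fv psi x -> exists t, Pi x = Some t /\ lassos_of R K t) ->
  sem (traces_of R K) psi Pi = sem (lassos_of R K) psi Pi.
Proof.
move=> wf PiL; have [m vb] := vars_below_ex psi.
exact: sem_traces_lassos wf vb Pi PiL.
Qed.
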